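(* Let $G$ be a path-pairable graph on $n$ vertices with diameter $d \geq 20$, and let $x,y$ be vertices with $d(x,y)=d$. For $i \geq 0$ let $S_i=\{z\in V(G): d(x,z)=i\}$, $s_i=|S_i|$, and $u_i=\sum_{j=0}^{i}s_j$. Then for every integer $k\geq 0$ with $u_{2k+1}\leq \frac{n}{2}$ we have $s_{2k}+s_{2k+1}\geq k$.
   Context: A graph $G$ on $n=2m$ vertices is path-pairable if for every partition of its vertex set into $m$ pairs $\{x_1,y_1\},\dots,\{x_m,y_m\}$ there exist pairwise edge-disjoint paths $P_1,\dots,P_m$ such that $P_i$ joins $x_i$ to $y_i$ for each $i$. $d(u,v)$ denotes the graph distance between vertices $u$ and $v$. *)

From mathcomp Require Import all_boot.
Set Implicit Arguments. Unset Strict Implicit. Unset Printing Implicit Defensive.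

Section Graph.
Variable T : finType.
Variable e : rel T.

Definition simple_graph : Prop := symmetric e /\ irreflexive e.

Definition walk_len (x y : T) (k : nat) : bool :=
  [exists p : k.-tuple T, path e x p && (last x p == y)].

(* graph distance: least k with a walk of length k from x to y
   (value #|T| if y is unreachable from x; irrelevant for connected graphs) *)
Definition dist (x y : T) : nat :=
  find (walk_len x y) (iota 0 #|T|).

Definition path_edges (x : T) (q : seq T) : seq {set T} :=
  [seq [set ab.1; ab.2] | ab <- zip (x :: q) q].

Definition is_gpath (x : T) (q : seq T) : bool :=
  path e x q && uniq (x :: q).

Definition pairing (P : {set {set T}}) : bool :=
  partition P [set: T] && [forall B in P, #|B| == 2].

Definition path_pairable : Prop :=
  ~~ odd #|T| /\
  forall P : {set {set T}}, pairing P ->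
    exists Q : {set T} -> T * seq T,
      (forall B, B \in P ->
         is_gpath (Q B).1 (Q B).2 /\ B = [set (Q B).1; last (Q B).1 (Q B).2]) /\
      (forall B1 B2, B1 \in P -> B2 \in P -> B1 != B2 ->
         forall E, E \in path_edges (Q B1).1 (Q B1).2 ->
                   E \notin path_edges (Q B2).1 (Q B2).2).

Definition layer (x : T) (i : nat) : {set T} := [set z | dist x z == i].
Definition s_ (x : T) (i : nat) : nat := #|layer x i|.
Definition u_ (x : T) (i : nat) : nat := \sum_(0 <= j < i.+1) s_ x j.

End Graph.

(* Let A be the ball of radius i around x, and suppose 2|A| <= n.  Pair every
   vertex of A with a vertex outside A and pair the remaining vertices
   arbitrarily.  In an edge-disjoint linkage of this pairing, the path leaving
   each vertex of A uses its own edge between the layers S_i and S_{i+1}, so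
   u_i <= s_i s_{i+1}.  Applied at i = 2j for all j <= k, these cut bounds
   force the layer sizes to grow: by induction u_{2j-1} >= j(j-1)/2, and then
   s_{2j} + s_{2j+1} < j would contradict u_{2j} <= s_{2j} s_{2j+1}. *)
From mathcomp Require Import all_boot zify.
Set Implicit Arguments. Unset Strict Implicit. Unset Printing Implicit Defensive.

Section Distance.
Variables (T : finType) (e : rel T).

Lemma walk_lenP x y k :
  reflect (exists p : seq T, [/\ size p = k, path e x p & last x p = y])
          (walk_len e x y k).
Proof.
apply: (iffP existsP) => [[p /andP[pp /eqP lp]]|[p [sp pp lp]]].
  by exists (val p); rewrite size_tuple.
have sp' : size p == k by rewrite sp.
by exists (Tuple sp'); rewrite /= pp lp eqxx.
Qed.

Lemma dist_le x y k : walk_len e x y k -> dist e x y <= k.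
Proof.
move=> w; rewrite /dist; have := find_size (walk_len e x y) (iota 0 #|T|).
rewrite size_iota; case: (ltnP k #|T|) => [lt_k _ | le_k le_find].
  rewrite leqNgt; apply/negP => /(before_find 0).
  by rewrite nth_iota // add0n w.
exact: leq_trans le_find le_k.
Qed.

Lemma dist_walk x y : connect e x y -> walk_len e x y (dist e x y).
Proof.
move=> /connectP[p pp ->]; case: (shortenP pp) => p' pp' up' _.
have w : walk_len e x (last x p') (size p') by apply/walk_lenP; exists p'.
have lt_p' : size p' < #|T|.
  by have := max_card (mem (x :: p')); move/card_uniqP: up' => ->.
have hw : has (walk_len e x (last x p')) (iota 0 #|T|).
  by apply/hasP; exists (size p') => //; rewrite mem_iota.
have := nth_find 0 hw; rewrite /dist nth_iota ?add0n //.
by move: hw; rewrite has_find size_iota.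
Qed.

Lemma dist_eq0 x z : connect e x z -> (dist e x z == 0) = (z == x).
Proof.
move=> cxz; apply/idP/eqP => [/eqP d0 | ->].
  by have := dist_walk cxz; rewrite d0 => /walk_lenP[[|? ?] [//= _ <-]].
by rewrite -leqn0 dist_le //; apply/walk_lenP; exists [::].
Qed.

Lemma dist_succ x a b : connect e x a -> e a b -> dist e x b <= (dist e x a).+1.
Proof.
move=> /dist_walk /walk_lenP[p [sp pp lp]] eab.
apply: dist_le; apply/walk_lenP; exists (rcons p b).
by rewrite size_rcons sp rcons_path pp lp eab last_rcons.
Qed.

Lemma s_0 x : (forall z, connect e x z) -> s_ e x 0 = 1.
Proof.
move=> cx; rewrite /s_ -(cards1 x); apply: eq_card => z.
by rewrite !inE dist_eq0.
Qed.

Definition ball x i := [set z | dist e x z <= i].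

Lemma card_ball x i : #|ball x i| = u_ e x i.
Proof.
elim: i => [|i IH].
  by rewrite /u_ big_nat1; apply: eq_card => z; rewrite !inE leqn0.
rewrite /u_ big_nat_recr //= -/(u_ e x i) -IH.
have -> : ball x i.+1 = ball x i :|: layer e x i.+1.
  by apply/setP => z; rewrite !inE leq_eqVlt ltnS orbC eq_sym.
rewrite cardsU; suff -> : ball x i :&: layer e x i.+1 = set0.
  by rewrite cards0 subn0.
by apply/setP => z; rewrite !inE; case: eqP => [->|]; rewrite ?ltnn ?andbF.
Qed.

Lemma u_mono x i j : i <= j -> u_ e x i <= u_ e x j.
Proof.
move=> le_ij; rewrite -!card_ball; apply/subset_leq_card/subsetP => z.
by rewrite !inE => /leq_trans; apply.
Qed.

Lemma ball_boundary_edge x i a b :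
  symmetric e -> (forall z, connect e x z) -> e a b ->
  a \in ball x i -> b \notin ball x i ->
  a \in layer e x i /\ b \in layer e x i.+1.
Proof.
move=> e_sym cx eab; rewrite !inE -ltnNge => a_in b_out.
have eba : e b a by rewrite e_sym.
have := dist_succ (cx a) eab; have := dist_succ (cx b) eba; lia.
Qed.

End Distance.

Section SparsePairing.
Variable T : finType.

Definition sparse_pairing (A D : {set T}) (P : {set {set T}}) : Prop :=
  partition P D /\ {in P, forall B : {set T}, #|B| = 2 /\ #|B :&: A| <= 1}.

Lemma sparse_pairing_add (A D : {set T}) P a b :
  sparse_pairing A D P -> a != b -> a \notin D -> b \notin D -> b \notin A ->
  sparse_pairing A (a |: (b |: D)) ([set a; b] |: P).
Proof.
move=> [partP pairsP] ab aD bD bA; split.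
  rewrite setUA; apply: partitionU1 => //.
    by apply/set0Pn; exists a; rewrite !inE eqxx.
  by rewrite disjoints_subset; apply/subsetP => z; rewrite !inE => /orP[] /eqP ->.
move=> B; rewrite in_setU1 => /predU1P[-> | /pairsP //]; split.
  by rewrite cards2 ab.
rewrite -(cards1 a) subset_leq_card //; apply/subsetP => z.
by rewrite !inE => /andP[/orP[] /eqP -> // bA']; rewrite bA' in bA.
Qed.

Lemma sparse_pairing_of_disjoint (A D : {set T}) :
  [disjoint D & A] -> ~~ odd #|D| -> exists P, sparse_pairing A D P.
Proof.
have [n] := ubnP #|D|; elim: n D => // n IH D lt_Dn dDA evD.
have [-> | [a aD]] := set_0Vmem D.
  by exists set0; split => [|B]; rewrite ?partition_set0 ?inE.
have [b bDa] : exists b, b \in D :\ a.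
  by apply/card_gt0P; move: evD; rewrite (cardsD1 a) aD; case: #|D :\ a|.
set D' := D :\ a :\ b.
have cardD : #|D| = #|D'|.+2 by rewrite (cardsD1 a) aD (cardsD1 b (D :\ a)) bDa.
have [P sparseP] : exists P, sparse_pairing A D' P.
  apply: IH.
  - by rewrite cardD in lt_Dn; lia.
  - by apply: disjointWl dDA; apply: subset_trans (subD1set _ _) (subD1set _ _).
  - by rewrite cardD /= negbK in evD.
have bD : b \in D := subsetP (subD1set D a) b bDa.
exists ([set a; b] |: P); rewrite -{1}(setD1K aD) -(setD1K bDa).
apply: sparse_pairing_add; rewrite ?setD11 ?(disjointFr dDA bD) //.
- by move: bDa; rewrite !inE eq_sym => /andP[].
- by rewrite !inE eqxx andbF.
Qed.

Lemma sparse_pairing_across (A A0 C : {set T}) :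
  A0 \subset A -> [disjoint C & A] -> #|A0| <= #|C| -> ~~ odd (#|A0| + #|C|) ->
  exists P, sparse_pairing A (A0 :|: C) P.
Proof.
have [n] := ubnP #|A0|; elim: n A0 C => // n IH A0 C lt_A0n sA0A dCA le_A0C ev.
have [A0_0 | [a aA0]] := set_0Vmem A0.
  by move: ev; rewrite A0_0 set0U cards0 add0n; apply: sparse_pairing_of_disjoint.
have [c cC] : exists c, c \in C.
  by apply/card_gt0P; apply: leq_trans le_A0C; apply/card_gt0P; exists a.
have aA : a \in A := subsetP sA0A a aA0.
have cA : c \in A = false := disjointFr dCA cC.
have aC : a \in C = false := disjointFl dCA aA.
have cardA0 : #|A0| = #|A0 :\ a|.+1 by rewrite (cardsD1 a) aA0.
have cardC : #|C| = #|C :\ c|.+1 by rewrite (cardsD1 c) cC.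
have [P sparseP] : exists P, sparse_pairing A ((A0 :\ a) :|: (C :\ c)) P.
  apply: IH.
  - by rewrite cardA0 in lt_A0n.
  - exact: subset_trans (subD1set _ _) sA0A.
  - by apply: disjointWl dCA; apply: subD1set.
  - by rewrite cardA0 cardC in le_A0C.
  - by rewrite cardA0 cardC addSn addnS /= negbK in ev.
exists ([set a; c] |: P); rewrite -(setD1K aA0) -(setD1K cC) -setUA (setUCA (A0 :\ a)).
have cA0 : c \in A0 = false by apply/negbTE/negP => /(subsetP sA0A); rewrite cA.
apply: sparse_pairing_add; rewrite ?inE ?eqxx ?aC ?cA ?cA0 ?andbF //.
by apply/eqP => ac; rewrite ac cA in aA.
Qed.

Lemma exists_sparse_pairing (A : {set T}) :
  2 * #|A| <= #|T| -> ~~ odd #|T| -> exists P, sparse_pairing A [set: T] P.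
Proof.
move=> le_A evT; rewrite -(setUCr A).
have cardAC := cardsC A.
apply: sparse_pairing_across => //.
- by rewrite disjoints_subset.
- by lia.
- by rewrite cardAC.
Qed.

Lemma sparse_pairingW (A : {set T}) P : sparse_pairing A [set: T] P -> pairing P.
Proof.
move=> [partP pairsP]; rewrite /pairing partP /=.
by apply/forall_inP => B /pairsP[-> _].
Qed.

End SparsePairing.

Lemma path_crossing (T : eqType) (e : rel T) (a : pred T) x0 q :
  path e x0 q -> a x0 != a (last x0 q) ->
  exists2 ab, ab \in zip (x0 :: q) q & e ab.1 ab.2 && (a ab.1 != a ab.2).
Proof.
elim: q x0 => [|y q IH] x0 /=; first by rewrite eqxx.
move=> /andP[exy pq] a_last; case: (boolP (a x0 != a y)) => [a_xy | /negPn/eqP a_xy].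
  by exists (x0, y); rewrite ?inE ?eqxx ?exy.
have [|ab abq hab] := IH y pq; first by rewrite -a_xy.
by exists ab; rewrite // inE abq orbT.
Qed.

Lemma leq_card_of_rel (aT rT : finType) (A : {set aT}) (W : {set rT})
    (R : aT -> rT -> bool) :
  (forall z, z \in A -> exists2 w, w \in W & R z w) ->
  (forall z1 z2 w, z1 \in A -> z2 \in A -> R z1 w -> R z2 w -> z1 = z2) ->
  #|A| <= #|W|.
Proof.
move=> R_total R_inj; pose f z := [pick w in W | R z w].
have fP z : z \in A -> exists2 w, f z = Some w & (w \in W) && R z w.
  move=> /R_total[w0 Ww0 Rw0]; rewrite /f.
  by case: pickP => [w hw | /(_ w0)]; [exists w | rewrite Ww0 Rw0].
have f_inj : {in A &, injective f}.
  move=> z1 z2 A1 A2; have [w1 -> /andP[_ R1]] := fP z1 A1.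
  have [w2 -> /andP[_ R2]] := fP z2 A2.
  by case=> eq_w; apply: (R_inj z1 z2 w1) => //; rewrite eq_w.
rewrite -(card_in_imset f_inj) -(card_imset W (@Some_inj _)).
apply/subset_leq_card/subsetP => _ /imsetP[z /fP[w -> /andP[Ww _]] ->].
exact: imset_f.
Qed.

Section BallCut.
Variables (T : finType) (e : rel T) (x : T) (i : nat).
Hypotheses (e_sym : symmetric e) (conn : forall z, connect e x z).
Variables (P : {set {set T}}) (Q : {set T} -> T * seq T).
Hypothesis sparseP : sparse_pairing (ball e x i) [set: T] P.
Hypothesis Q_links : forall B, B \in P ->
  is_gpath e (Q B).1 (Q B).2 /\ B = [set (Q B).1; last (Q B).1 (Q B).2].
Hypothesis Q_edge_disjoint : forall B1 B2, B1 \in P -> B2 \in P -> B1 != B2 ->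
  forall E, E \in path_edges (Q B1).1 (Q B1).2 -> E \notin path_edges (Q B2).1 (Q B2).2.

Let routes z (ab : T * T) :=
  [exists B in P, (z \in B) && ([set ab.1; ab.2] \in path_edges (Q B).1 (Q B).2)].

Lemma routes_total z : z \in ball e x i ->
  exists2 ab, ab \in setX (layer e x i) (layer e x i.+1) & routes z ab.
Proof.
move=> zA; have : z \in cover P by rewrite (cover_partition sparseP.1) inE.
case/bigcupP => B BP zB; have [/andP[pathB _] defB] := Q_links BP.
have [cardB capB] := sparseP.2 B BP.
move: pathB defB; set p0 := (Q B).1; set q := (Q B).2 => pathB defB.
have ends : (p0 \in ball e x i) != (last p0 q \in ball e x i).
  case h0: (p0 \in _); case h1: (last p0 q \in _) => //=.
    suff sB : B \subset ball e x i by move: capB; rewrite (setIidPl sB) cardB.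
    by rewrite defB; apply/subsetP => w; rewrite in_set2 => /orP[] /eqP ->.
  by move: zB zA; rewrite defB in_set2 => /orP[] /eqP ->; rewrite ?h0 ?h1.
have [ab /(map_f (fun ab : T * T => [set ab.1; ab.2])) abE /andP[eab abA]] :=
  path_crossing (a := [in ball e x i]) pathB ends.
wlog ab_out : ab eab abA abE / ab.1 \in ball e x i.
  move=> wlog_out; case: (boolP (ab.1 \in ball e x i)) => [|ab1_in].
    exact: wlog_out.
  apply: (wlog_out (ab.2, ab.1)) => /=; rewrite 1?eq_sym 1?e_sym 1?setUC //.
  by move: abA; rewrite (negbTE ab1_in); case: (ab.2 \in _).
have ab2_out : ab.2 \notin ball e x i by move: abA; rewrite ab_out; case: (ab.2 \in _).
have [l1 l2] := ball_boundary_edge e_sym conn eab ab_out ab2_out.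
exists ab; first by rewrite inE l1 l2.
by apply/existsP; exists B; rewrite BP zB.
Qed.

Lemma routes_inj z1 z2 ab : z1 \in ball e x i -> z2 \in ball e x i ->
  routes z1 ab -> routes z2 ab -> z1 = z2.
Proof.
move=> z1A z2A /exists_inP[B1 B1P /andP[z1B E1]] /exists_inP[B2 B2P /andP[z2B E2]].
have [eqB | neqB] := eqVneq B1 B2; last first.
  by move: (Q_edge_disjoint B1P B2P neqB E1); rewrite E2.
subst B2.
have [_ /card_le1_eqP capB] := sparseP.2 B1 B1P.
by apply: capB; rewrite inE ?z1B ?z2B.
Qed.

Lemma card_ball_le_cut : #|ball e x i| <= s_ e x i * s_ e x i.+1.
Proof. by rewrite /s_ -cardsX; apply: leq_card_of_rel routes_total routes_inj. Qed.

End BallCut.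

Lemma path_pairable_cut (T : finType) (e : rel T) x i :
  symmetric e -> path_pairable e -> (forall z, connect e x z) ->
  2 * u_ e x i <= #|T| -> u_ e x i <= s_ e x i * s_ e x i.+1.
Proof.
move=> e_sym [evT linkP] conn le_u; rewrite -card_ball in le_u *.
have [P sparseP] := exists_sparse_pairing le_u evT.
have [Q [Q_links Q_disj]] := linkP P (sparse_pairingW sparseP).
exact: card_ball_le_cut Q_links Q_disj.
Qed.

Lemma leq_add_of_mul_bound j U a b :
  j * (j - 1) <= 2 * U -> U + a <= a * b -> 0 < U + a -> j <= a + b.
Proof.
move=> le_jU le_ab pos; rewrite leqNgt; apply/negP => lt_abj.
case: j lt_abj le_jU => [//|[|j]] lt_abj le_jU; last by nia.
have ab0 : a * b = 0 by nia.
lia.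
Qed.

Lemma layer_pairs_growth (s : nat -> nat) k : 0 < s 0 ->
  (forall j, j <= k -> \sum_(0 <= l < (2 * j).+1) s l <= s (2 * j) * s (2 * j).+1) ->
  k <= s (2 * k) + s (2 * k).+1.
Proof.
move=> s0_gt0 cut.
suff growth j : j <= k ->
    j * (j - 1) <= 2 * \sum_(0 <= l < 2 * j) s l /\ j <= s (2 * j) + s (2 * j).+1.
  exact: (growth k (leqnn k)).2.
elim: j => [_ | j IH lt_jk]; first by split.
have [IH_sum _] := IH (ltnW lt_jk).
have double_succ : 2 * j.+1 = (2 * j).+2 by rewrite mulnS.
have sum_step : j.+1 * (j.+1 - 1) <= 2 * \sum_(0 <= l < 2 * j.+1) s l.
  by rewrite double_succ !big_nat_recr //=; nia.
split=> //; apply: (leq_add_of_mul_bound sum_step).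
  by have := cut _ lt_jk; rewrite double_succ big_nat_recr.
by rewrite double_succ big_ltn //; lia.
Qed.

Theorem lemma1 (T : finType) (e : rel T) (d : nat) (x y : T) :
  simple_graph e ->
  path_pairable e ->
  (forall u v : T, connect e u v) ->
  (forall u v : T, dist e u v <= d) ->
  dist e x y = d ->
  20 <= d ->
  forall k : nat, 2 * u_ e x (2 * k).+1 <= #|T| ->
    k <= s_ e x (2 * k) + s_ e x (2 * k).+1.
Proof.
move=> [e_sym _] pp conn _ _ _ k le_u.
apply: layer_pairs_growth; first by rewrite s_0.
move=> j le_jk; apply: path_pairable_cut => //.
by apply: leq_trans le_u; rewrite leq_mul2l u_mono //; lia.
Qed.
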